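(* Let $S$ be the three-vertex tree with root $a$, whose right child is $b$, where $b$ has a left child $c$ (preorder $132$), and let $S'$ be the three-vertex tree with a root having both a left child and a right child (preorder $213$); all edges of $S$ and $S'$ are contiguous. Let $(P,e)$ be any tree pattern. Let $Q$ be obtained from $S$ by attaching $(P,e)$ as the right subtree of the leaf $c$ via a non-contiguous edge, and let $Q'$ be obtained from $S'$ by attaching $(P,e)$ as the left subtree of the left leaf of $S'$ via a non-contiguous edge. Then $Q$ and $Q'$ are Wilf-equivalent.
   Context: $\mathcal{T}_n$ is the set of binary trees on $n$ vertices labeled $1,\dots,n$ by the search tree property (labels of combined trees reassigned by this property). $c_L,c_R,p$: left child, right child, parent. A tree pattern is $(P,e)$, $P\in\mathcal{T}_k$, $e\colon[k]\setminus\{\text{root}\}\to\{0,1\}$; edge $(i,p(i))$ is contiguous if $e(i)=1$, non-contiguous if $e(i)=0$. $T\in\mathcal{T}_n$ contains $(P,e)$ if there is an injection $f\colon[k]\to[n]$ such that for every non-root $i$ of $P$: if $e(i)=1$, $f(i)$ is the left (resp. right) child of $f(p(i))$ when $i$ is the left (resp. right) child of $p(i)$; if $e(i)=0$, $f(i)$ lies in the left (resp. right) subtree of $f(p(i))$. $\mathcal{T}_n(Q)$ is the set of avoiders of $Q$. $Q,Q'$ are Wilf-equivalent if $|\mathcal{T}_n(Q)|=|\mathcal{T}_n(Q')|$ for all $n\ge0$. *)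

From mathcomp Require Import all_boot.
From mathcomp Require Import boolp.
Set Implicit Arguments. Unset Strict Implicit. Unset Printing Implicit Defensive.

(* Unlabeled binary trees; the labels 1..n of the paper are determined by the
   search-tree (in-order) property, so a vertex is identified with its position,
   i.e. the path from the root: a seq bool, false = go left, true = go right. *)
Inductive tree : Type := Leaf | Node of tree & tree.

Fixpoint tsize (t : tree) : nat :=
  if t is Node l r then (tsize l + tsize r).+1 else 0.

Fixpoint tvert (t : tree) (u : seq bool) : bool :=
  match t, u with
  | Leaf, _ => false
  | Node _ _, [::] => true
  | Node l r, d :: s => tvert (if d then r else l) s
  end.

Fixpoint trees_upto (d : nat) : seq tree :=
  if d is d'.+1 then Leaf :: [seq Node l r | l <- trees_upto d', r <- trees_upto d']
  else [:: Leaf].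

(* Tree patterns (P,e): a binary tree whose child edges carry a flag,
   true = contiguous, false = non-contiguous.
   [PN l cl r cr] has left subtree l, left edge flag cl (meaningful only when l
   is nonempty), right subtree r, right edge flag cr. *)
Inductive pat : Type := PE | PN of pat & bool & pat & bool.

Fixpoint pvert (p : pat) (u : seq bool) : bool :=
  match p, u with
  | PE, _ => false
  | PN _ _ _ _, [::] => true
  | PN l _ r _, d :: s => pvert (if d then r else l) s
  end.

(* e(v): flag of the edge between the (non-root) vertex v and its parent *)
Fixpoint pedge (p : pat) (u : seq bool) : bool :=
  match p, u with
  | PN l cl r cr, d :: s =>
      if s is [::] then (if d then cr else cl) else pedge (if d then r else l) s
  | _, _ => false
  end.

Definition contains (Q : pat) (T : tree) : Prop :=
  exists f : seq bool -> seq bool,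
    [/\ (forall u v, pvert Q u -> pvert Q v -> f u = f v -> u = v),
        (forall u, pvert Q u -> tvert T (f u)) &
        (forall u d, pvert Q (rcons u d) ->
           if pedge Q (rcons u d) then f (rcons u d) = rcons (f u) d
           else exists s, f (rcons u d) = f u ++ d :: s)].

(* |T_n(Q)| : number of trees with n vertices avoiding Q
   (every tree with n vertices has depth <= n). *)
Definition num_avoiders (Q : pat) (n : nat) : nat :=
  count (fun T => (tsize T == n) && `[< ~ contains Q T >]) (trees_upto n).

Definition wilf_equiv (Q Q' : pat) : Prop :=
  forall n, num_avoiders Q n = num_avoiders Q' n.

(* Q : S = root a, right child b (contiguous), b has left child c (contiguous);
   P attached as right subtree of c via a non-contiguous edge. *)
Definition Q20 (P : pat) : pat :=
  PN PE false (PN (PN PE false P false) true PE false) true.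

(* Q' : S' = root with left and right children (contiguous);
   P attached as left subtree of the left leaf via a non-contiguous edge. *)
Definition Q20' (P : pat) : pat :=
  PN (PN P false PE false) true (PN PE false PE false) true.

(* Write T = Node L R and let X_1, ..., X_k be the left subtrees hanging off the
   right spine of R.  The bijection [phi] sends T to the right spine with left
   subtrees psi X_1, ..., psi X_k, phi L, where psi (Node A B) = Node B (phi A).
   T contains Q iff P occurs in the right subtree of some left child of a right
   child, and phi T contains Q' iff P occurs in the left subtree of some left
   child whose parent has a right child.  In both trees such an occurrence lies,
   recursively, inside L (resp. phi L), or, for some X_i = Node A B, P occurs in
   B or the occurrence lies inside A (resp. phi A).  As [phi] is a size-preserving
   injection, it permutes the trees with n vertices, mapping Q-avoiders onto
   Q'-avoiders. *)

From HB Require Import structures.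
From mathcomp Require Import all_boot boolp zify.
Set Implicit Arguments. Unset Strict Implicit. Unset Printing Implicit Defensive.

Definition tree_eq_dec (s t : tree) : decidable (s = t).
Proof. rewrite /decidable; decide equality. Defined.
HB.instance Definition _ := comparableMixin tree_eq_dec.

Fixpoint tdepth (t : tree) : nat :=
  if t is Node l r then (maxn (tdepth l) (tdepth r)).+1 else 0.

Lemma mem_trees_upto d t : (t \in trees_upto d) = (tdepth t <= d).
Proof.
elim: d t => [|d IHd] [|l r] //=; rewrite in_cons /= ltnS geq_max -!IHd.
apply/allpairsP/andP => [[[l' r'] /= [? ? [-> ->]]] // | [? ?]].
by exists (l, r).
Qed.

Lemma uniq_trees_upto d : uniq (trees_upto d).
Proof.
elim: d => //= d IHd; apply/andP; split; first by apply/allpairsP => -[? []].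
by apply: allpairs_uniq => // -[? ?] [? ?] _ _ [-> ->].
Qed.

Lemma tdepth_le_tsize t : tdepth t <= tsize t.
Proof. by elim: t => //= l IHl r IHr; rewrite ltnS geq_max; lia. Qed.

Lemma tsize_ind (Pt : tree -> Prop) :
  (forall t, (forall s, tsize s < tsize t -> Pt s) -> Pt t) -> forall t, Pt t.
Proof.
move=> IH t; have [n] := ubnP (tsize t); elim: n t => // n IHn t lt_tn.
by apply: IH => s lt_st; apply: IHn; lia.
Qed.

Fixpoint tsub (t : tree) (u : seq bool) {struct u} : tree :=
  if u is d :: s then
    if t is Node l r then tsub (if d then r else l) s else Leaf
  else t.

Lemma tsub_Leaf u : tsub Leaf u = Leaf.
Proof. by case: u. Qed.

Lemma tsub_cat t w v : tsub t (w ++ v) = tsub (tsub t w) v.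
Proof. by elim: w t => [|d w IHw] [|l r] //=; rewrite tsub_Leaf. Qed.

Lemma tvert_cat t w v : tvert t (w ++ v) = tvert (tsub t w) v.
Proof. by elim: w t => [|d w IHw] [|l r] //=; case: (v). Qed.

Definition embeds (Q : pat) (T : tree) (f : seq bool -> seq bool) : Prop :=
  [/\ (forall u v, pvert Q u -> pvert Q v -> f u = f v -> u = v),
      (forall u, pvert Q u -> tvert T (f u)) &
      (forall u d, pvert Q (rcons u d) ->
         if pedge Q (rcons u d) then f (rcons u d) = rcons (f u) d
         else exists s, f (rcons u d) = f u ++ d :: s)].

Lemma pvert_rcons Q u d : pvert Q (rcons u d) -> pvert Q u.
Proof. by elim: u Q => [|x u IHu] [|l cl r cr] //=; apply: IHu. Qed.

Lemma embeds_prefix Q T f u d :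
  embeds Q T f -> pvert Q (rcons u d) -> prefix (f u) (f (rcons u d)).
Proof.
case=> _ _ f_edge /f_edge; case: pedge => [->|[s ->]]; first exact: prefix_rcons.
exact: prefix_prefix.
Qed.

Lemma embeds_prefix_root Q T f w u :
  embeds Q T f -> prefix w (f [::]) -> pvert Q u -> prefix w (f u).
Proof.
move=> f_emb w_f0; elim/last_ind: u => // u d IHu Qud.
exact: prefix_trans (IHu (pvert_rcons Qud)) (embeds_prefix f_emb Qud).
Qed.

Lemma prefix_catE (A : eqType) (w x : seq A) : prefix w x -> x = w ++ drop (size w) x.
Proof. by case/prefixP=> s ->; rewrite drop_size_cat. Qed.

Lemma embeds_tsub Q T f w :
  embeds Q T f -> (forall u, pvert Q u -> prefix w (f u)) ->
  embeds Q (tsub T w) (fun u => drop (size w) (f u)).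
Proof.
case=> f_inj f_vert f_edge f_w.
have f_cat u : pvert Q u -> f u = w ++ drop (size w) (f u).
  by move=> /f_w; apply: prefix_catE.
split=> [u v Qu Qv eq_uv | u Qu | u d Qud].
- by apply: f_inj; rewrite // (f_cat u) // (f_cat v) // eq_uv.
- by rewrite -tvert_cat -f_cat // f_vert.
have Qu := pvert_rcons Qud; move: (f_edge u d Qud).
rewrite (f_cat _ Qud) (f_cat _ Qu); case: pedge => [|[s]].
  by rewrite rcons_cat => /(congr1 (drop (size w))); rewrite !drop_size_cat.
by rewrite -catA => /(congr1 (drop (size w))); rewrite !drop_size_cat //; exists s.
Qed.

Lemma embeds_from_tsub Q T f w :
  embeds Q (tsub T w) f -> embeds Q T (fun u => w ++ f u).
Proof.
case=> f_inj f_vert f_edge; split=> [u v Qu Qv /(congr1 (drop (size w)))|u Qu|u d Qud].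
- by rewrite !drop_size_cat //; apply: f_inj.
- by rewrite tvert_cat f_vert.
move: (f_edge u d Qud); case: pedge => [->|[s ->]]; first by rewrite rcons_cat.
by exists s; rewrite catA.
Qed.

Lemma contains_tsub P T w : contains P (tsub T w) -> contains P T.
Proof. by case=> f /embeds_from_tsub f_emb; exists (fun u => w ++ f u). Qed.

Lemma embeds_restrict Q P T f a :
  (forall p, pvert Q (a ++ p) = pvert P p) ->
  (forall p d, pedge Q (a ++ rcons p d) = pedge P (rcons p d)) ->
  embeds Q T f -> embeds P T (fun p => f (a ++ p)).
Proof.
move=> QP_vert QP_edge [f_inj f_vert f_edge]; split.
- move=> u v; rewrite -!QP_vert => Qu Qv /(f_inj _ _ Qu Qv) /(congr1 (drop (size a))).
  by rewrite !drop_size_cat.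
- by move=> u; rewrite -QP_vert; apply: f_vert.
- by move=> u d; rewrite -QP_vert -QP_edge -!rcons_cat; apply: f_edge.
Qed.

Lemma contains_below Q P T f a w :
  (forall p, pvert Q (a ++ p) = pvert P p) ->
  (forall p d, pedge Q (a ++ rcons p d) = pedge P (rcons p d)) ->
  embeds Q T f -> prefix w (f a) -> contains P (tsub T w).
Proof.
move=> QP_vert QP_edge f_emb w_fa.
have g_emb := embeds_restrict QP_vert QP_edge f_emb.
eexists; apply: (embeds_tsub g_emb) => p.
by apply: (embeds_prefix_root g_emb); rewrite cats0.
Qed.

Definition somewhere (X : tree -> Prop) (T : tree) : Prop := exists w, X (tsub T w).

Lemma somewhere_Leaf X : somewhere X Leaf <-> X Leaf.
Proof. by split=> [[w]|]; [rewrite tsub_Leaf | exists [::]]. Qed.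

Lemma somewhere_Node X l r :
  somewhere X (Node l r) <-> X (Node l r) \/ somewhere X l \/ somewhere X r.
Proof.
split=> [[[|[] w] /= Xw]|[Xlr|[[w Xw]|[w Xw]]]]; last 3 first.
- by exists [::].
- by exists (false :: w).
- by exists (true :: w).
- by left.
- by right; right; exists w.
- by right; left; exists w.
Qed.

Definition rooted_Q20 (P : pat) (S : tree) : Prop :=
  if S is Node _ (Node (Node _ Z) _) then contains P Z else False.

Definition rooted_Q20' (P : pat) (S : tree) : Prop :=
  if S is Node (Node Y _) (Node _ _) then contains P Y else False.

Lemma pvert_Q20 P u : pvert (Q20 P) u ->
  [\/ u = [::], u = [:: true], u = [:: true; false]
    | exists2 p, u = [:: true, false, true & p] & pvert P p].
Proof.
case: u => [|[] [|[] [|[] p]]] //= Pp; [exact: Or41 | exact: Or42 | exact: Or43 |].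
by apply: Or44; exists p.
Qed.

Lemma pvert_Q20' P u : pvert (Q20' P) u ->
  [\/ u = [::], u = [:: false], u = [:: true]
    | exists2 p, u = [:: false, false & p] & pvert P p].
Proof.
case: u => [|[] [|[] [|x p]]] //= Pp; [exact: Or41 | exact: Or43 | exact: Or42 | |].
- by apply: Or44; exists [::].
- by apply: Or44; exists (x :: p).
Qed.

Lemma pedge_Q20 P p d :
  pedge (Q20 P) ([:: true; false; true] ++ rcons p d) = pedge P (rcons p d).
Proof. by case: p. Qed.

Lemma pedge_Q20' P p d :
  pedge (Q20' P) ([:: false; false] ++ rcons p d) = pedge P (rcons p d).
Proof. by case: p. Qed.

Lemma rooted_Q20_contains P S : rooted_Q20 P S -> contains (Q20 P) S.
Proof.
case: S => [|L [|[|Y Z] W]] //= [g [g_inj g_vert g_edge]].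
exists (fun u =>
  if u is [:: true, false, true & p] then [:: true, false, true & g p] else u).
split=> [u v|u|u d].
- case/pvert_Q20=> [->|->|->|[p -> Pp]]; case/pvert_Q20=> [->|->|->|[q -> Pq]] //=.
  by case=> /(g_inj _ _ Pp Pq) ->.
- by case/pvert_Q20=> [->|->|->|[p -> /g_vert]].
case: u => [|[] [|[] [|[] p]]]; try by case: d.
  by case: d => //= _; exists (g [::]).
rewrite -[rcons _ d]/([:: true; false; true] ++ rcons p d) pedge_Q20 => /g_edge.
by case: pedge => /= [->|[s ->]] //; exists s.
Qed.

Lemma rooted_Q20'_contains P S : rooted_Q20' P S -> contains (Q20' P) S.
Proof.
case: S => [|[|Y1 Y2] [|R1 R2]] //= [g [g_inj g_vert g_edge]].
exists (fun u => if u is [:: false, false & p] then [:: false, false & g p] else u).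
split=> [u v|u|u d].
- case/pvert_Q20'=> [->|->|->|[p -> Pp]]; case/pvert_Q20'=> [->|->|->|[q -> Pq]] //=.
  by case=> /(g_inj _ _ Pp Pq) ->.
- by case/pvert_Q20'=> [->|->|->|[p -> /g_vert]].
case: u => [|[] [|[] p]]; try by case: d.
  by case: d => //= _; exists (g [::]).
rewrite -[rcons _ d]/([:: false; false] ++ rcons p d) pedge_Q20' => /g_edge.
by case: pedge => /= [->|[s ->]] //; exists s.
Qed.

Lemma contains_Q20E P T :
  P <> PE -> contains (Q20 P) T <-> somewhere (rooted_Q20 P) T.
Proof.
move=> P_nonempty; split=> [[f f_emb]|[w /rooted_Q20_contains /contains_tsub]] //.
have P0 : pvert P [::] by case: (P) P_nonempty.
have [_ f_vert f_edge] := f_emb.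
have f1 : f [:: true] = rcons (f [::]) true := f_edge [::] true isT.
have f2 : f [:: true; false] = rcons (f [:: true]) false := f_edge [:: true] false isT.
have [s f3] : exists s, f [:: true; false; true] = f [:: true; false] ++ true :: s.
  exact: f_edge [:: true; false] true P0.
have P_Z : contains P (tsub T (f [::] ++ [:: true; false; true])).
  apply: (contains_below (a := [:: true; false; true]) _ (@pedge_Q20 P) f_emb) => //.
  by apply/prefixP; exists s; rewrite f3 f2 f1 -!cats1 -!catA.
have := f_vert _ (isT : pvert (Q20 P) [:: true; false]).
rewrite f2 f1 -!cats1 -catA tvert_cat tsub_cat in P_Z * => T_shape.
exists (f [::]); move: T_shape P_Z.
by case: (tsub T (f [::])) => [|L [|[|Y Z] W]] //=.
Qed.

Lemma contains_Q20'E P T :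
  P <> PE -> contains (Q20' P) T <-> somewhere (rooted_Q20' P) T.
Proof.
move=> P_nonempty; split=> [[f f_emb]|[w /rooted_Q20'_contains /contains_tsub]] //.
have P0 : pvert P [::] by case: (P) P_nonempty.
have [_ f_vert f_edge] := f_emb.
have f1 : f [:: false] = rcons (f [::]) false := f_edge [::] false isT.
have f1' : f [:: true] = rcons (f [::]) true := f_edge [::] true isT.
have [s f2] : exists s, f [:: false; false] = f [:: false] ++ false :: s.
  exact: f_edge [:: false] false P0.
have P_Y : contains P (tsub T (f [::] ++ [:: false; false])).
  apply: (contains_below (a := [:: false; false]) _ (@pedge_Q20' P) f_emb) => //.
  by apply/prefixP; exists s; rewrite f2 f1 -!cats1 -!catA.
have := f_vert _ (isT : pvert (Q20' P) [:: false]).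
have := f_vert _ (isT : pvert (Q20' P) [:: true]).
rewrite f1 f1' -!cats1 !tvert_cat tsub_cat in P_Y * => T_right T_left.
exists (f [::]); move: T_right T_left P_Y.
by case: (tsub T (f [::])) => [|[|Y1 Y2] [|R1 R2]] //=.
Qed.

(* The inner fixpoint is [spine (phi L)] below, inlined to make [phi]
   structurally recursive. *)
Fixpoint phi (t : tree) : tree :=
  if t is Node L R then
    (fix spine_phi (R : tree) : tree :=
       if R is Node X R' then
         Node (if X is Node A B then Node B (phi A) else Leaf) (spine_phi R')
       else Node (phi L) Leaf) R
  else Leaf.

Definition psi (X : tree) : tree := if X is Node A B then Node B (phi A) else Leaf.

Fixpoint spine (a R : tree) : tree :=
  if R is Node X R' then Node (psi X) (spine a R') else Node a Leaf.

Lemma phiE L R : phi (Node L R) = spine (phi L) R.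
Proof. by elim: R => //= X _ R' <-. Qed.

Fixpoint on_spine (X : tree -> Prop) (R : tree) : Prop :=
  if R is Node Y R' then X Y \/ on_spine X R' else False.

Lemma on_spine_iff X X' R :
  (forall Y, tsize Y < tsize R -> (X Y <-> X' Y)) -> (on_spine X R <-> on_spine X' R).
Proof.
elim: R => [|Y _ R IHR] //= XX'.
have XY : X Y <-> X' Y by apply: XX' => /=; lia.
have XR : on_spine X R <-> on_spine X' R.
  by apply: IHR => Z ltZR; apply: XX' => /=; lia.
by rewrite XY XR.
Qed.

Definition branch_occ (P : pat) (Z : tree -> Prop) (X : tree) : Prop :=
  if X is Node A B then contains P B \/ Z A else False.

Lemma rooted_Q20_Node_contains P A B : rooted_Q20 P (Node A B) -> contains P B.
Proof.
by case: B => [|[|Y Z] W] //= PZ; apply: (contains_tsub (w := [:: false; true])).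
Qed.

Lemma rooted_Q20'_Node_contains P B C : rooted_Q20' P (Node B C) -> contains P B.
Proof.
by case: B C => [|Y1 Y2] [|C1 C2] //= PY; apply: (contains_tsub (w := [:: false])).
Qed.

Lemma somewhere_contains (X : tree -> Prop) P T :
  (forall S, X S -> contains P S) -> somewhere X T -> contains P T.
Proof. by move=> XP [w /XP /contains_tsub]. Qed.

Lemma somewhere_rooted_Q20_contains P T : somewhere (rooted_Q20 P) T -> contains P T.
Proof.
apply: somewhere_contains => -[|A B] // /rooted_Q20_Node_contains PB.
exact: (contains_tsub (w := [:: true])).
Qed.

Lemma somewhere_rooted_Q20'_contains P T : somewhere (rooted_Q20' P) T -> contains P T.
Proof.
apply: somewhere_contains => -[|B C] // /rooted_Q20'_Node_contains PB.
exact: (contains_tsub (w := [:: false])).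
Qed.

Lemma somewhere_rooted_Q20_Node P L R :
  somewhere (rooted_Q20 P) (Node L R) <->
  somewhere (rooted_Q20 P) L \/ on_spine (branch_occ P (somewhere (rooted_Q20 P))) R.
Proof.
elim: R L => [|X _ R IHR] L /=.
  by rewrite somewhere_Node somewhere_Leaf /=; tauto.
rewrite somewhere_Node IHR.
case: X => [|A B] /=.
  by rewrite somewhere_Leaf /=; tauto.
(* Occurrences rooted at [Node A B] or inside [B] are subsumed by [contains P B]. *)
rewrite somewhere_Node.
have := @rooted_Q20_Node_contains P A B.
have := @somewhere_rooted_Q20_contains P B.
tauto.
Qed.

Lemma somewhere_rooted_Q20'_spine P a R :
  somewhere (rooted_Q20' P) (spine a R) <->
  somewhere (rooted_Q20' P) a \/
  on_spine (branch_occ P (somewhere (rooted_Q20' P) \o phi)) R.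
Proof.
elim: R => [|X _ R IHR] /=.
  by rewrite somewhere_Node somewhere_Leaf; case: a => [|? ?] /=; tauto.
rewrite somewhere_Node IHR.
have -> : rooted_Q20' P (Node (psi X) (spine a R)) =
          if X is Node _ B then contains P B else False.
  by case: R {IHR} => [|? ?]; case: X.
case: X => [|A B] /=.
  by rewrite somewhere_Leaf /=; tauto.
rewrite somewhere_Node.
have := @rooted_Q20'_Node_contains P B (phi A).
have := @somewhere_rooted_Q20'_contains P B.
tauto.
Qed.

Lemma somewhere_rooted_Q20_phi P T :
  somewhere (rooted_Q20 P) T <-> somewhere (rooted_Q20' P) (phi T).
Proof.
elim/tsize_ind: T => -[|L R] IH; first by rewrite /= !somewhere_Leaf.
rewrite phiE somewhere_rooted_Q20_Node somewhere_rooted_Q20'_spine IH /=; last by lia.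
rewrite (on_spine_iff (X' := branch_occ P (somewhere (rooted_Q20' P) \o phi))) //.
by case=> [|A B] //= ltYR; rewrite IH //=; lia.
Qed.

Lemma tsize_spine a R :
  (forall A, tsize A < tsize R -> tsize (phi A) = tsize A) ->
  tsize (spine a R) = tsize a + tsize R + 1.
Proof.
elim: R => [|X _ R IHR] /= size_phi; first lia.
rewrite IHR => [|A ltAR]; last by apply: size_phi => /=; lia.
case: X size_phi => [|A B] /= size_phi; first lia.
by rewrite size_phi /=; lia.
Qed.

Lemma tsize_phi T : tsize (phi T) = tsize T.
Proof.
elim/tsize_ind: T => -[|L R] IH //.
rewrite phiE tsize_spine => [|A ltAR]; last by apply: IH => /=; lia.
by rewrite IH /=; lia.
Qed.

Lemma spine_Node a R : exists S1 S2, spine a R = Node S1 S2.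
Proof. by case: R => [|X R] /=; do 2!eexists. Qed.

Lemma spine_inj a1 a2 R1 R2 :
  (forall A B, tsize A < tsize R1 -> phi A = phi B -> A = B) ->
  spine a1 R1 = spine a2 R2 -> R1 = R2 /\ a1 = a2.
Proof.
elim: R1 R2 => [|X1 _ R1 IHR] [|X2 R2] phi_inj /=.
- by case=> ->.
- by case=> _; case: (R2).
- by case=> _; case: (R1).
case=> psi_eq /IHR [A B ltAR|-> ->]; first by apply: phi_inj => /=; lia.
split=> //; congr Node.
case: X1 X2 phi_inj psi_eq => [|A1 B1] [|A2 B2] //= phi_inj [-> /phi_inj -> //].
lia.
Qed.

Lemma phi_inj : injective phi.
Proof.
move=> T1; elim/tsize_ind: T1 => -[|L1 R1] IH [|L2 R2] //; rewrite ?phiE.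
- by have [S1 [S2 ->]] := spine_Node (phi L2) R2.
- by have [S1 [S2 ->]] := spine_Node (phi L1) R1.
case/spine_inj=> [A B ltAR|-> /IH ->] //=; [apply: IH => /=|]; lia.
Qed.

Definition trees_of_size (n : nat) : seq tree := [seq T <- trees_upto n | tsize T == n].

Lemma mem_trees_of_size n T : (T \in trees_of_size n) = (tsize T == n).
Proof.
rewrite mem_filter mem_trees_upto andb_idr // => /eqP sizeT.
by rewrite -sizeT tdepth_le_tsize.
Qed.

Lemma perm_map_trees_of_size n (f : tree -> tree) :
  injective f -> (forall T, tsize (f T) = tsize T) ->
  perm_eq (map f (trees_of_size n)) (trees_of_size n).
Proof.
move=> f_inj f_size.
have uniq_s : uniq (trees_of_size n) by apply/filter_uniq/uniq_trees_upto.
have uniq_fs : uniq (map f (trees_of_size n)) by rewrite map_inj_uniq.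
have sub : {subset map f (trees_of_size n) <= trees_of_size n}.
  by move=> _ /mapP[T + ->]; rewrite !mem_trees_of_size f_size.
have [_ eq_s] := uniq_min_size uniq_fs sub (eq_leq (esym (size_map f _))).
exact: uniq_perm.
Qed.

Lemma num_avoidersE Q n :
  num_avoiders Q n = count (fun T => `[< ~ contains Q T >]) (trees_of_size n).
Proof. by rewrite /num_avoiders count_filter; apply: eq_count => T /=; rewrite andbC. Qed.

Theorem lemma20 (P : pat) : P <> PE -> wilf_equiv (Q20 P) (Q20' P).
Proof.
move=> P_nonempty n; rewrite !num_avoidersE.
have /permP perm_phi := perm_map_trees_of_size n phi_inj tsize_phi.
rewrite -[RHS]perm_phi count_map; apply: eq_count => T /=; apply: asbool_equiv_eq.
by rewrite contains_Q20E // contains_Q20'E // somewhere_rooted_Q20_phi.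
Qed.
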